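(* Let $m\ge3$ and let $T\subset\mathcal M$ with $|T|=m-1$. Then $$R^{(\min)}_T\ \ge\ \frac1{m-2}\sum_{j\in T}H(X_{T\setminus\{j\}}|X_j).$$
   Context: Let $\mathcal M=\{1,\dots,m\}$, and let $X_{\mathcal M}$ be jointly distributed finite-valued random variables, with $X_A=(X_i:i\in A)$. For $T\subset\mathcal M$, let $$\mathcal R_T=\Big\{(R_i:i\in T):\ \sum_{i\in B\cap T}R_i\ge H(X_{B\cap T}|X_{B^c})\ \text{ for all } B\subsetneq\mathcal M \text{ with } B\cap T\neq\emptyset\Big\},$$ and let $R^{(\min)}_T=\min_{(R_i)\in\mathcal R_T}\sum_{i\in T}R_i$. *)

From mathcomp Require Import all_boot.
From Stdlib Require Import Reals.
Set Implicit Arguments. Unset Strict Implicit. Unset Printing Implicit Defensive.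

Definition rsum (I : finType) (A : {pred I}) (F : I -> R) : R :=
  \big[Rplus/0%R]_(i in A) F i.

(* The random variables X_1..X_m live on a finite probability space
   (Omega, P); X i : Omega -> nat is the i-th (finite-valued) variable. *)
Definition is_pmf (Omega : finType) (P : Omega -> R) : Prop :=
  (forall w, (0 <= P w)%R) /\ rsum [pred w : Omega | true] P = 1%R.

Definition prob_eq (Omega : finType) (P : Omega -> R) (m : nat)
  (X : 'I_m -> Omega -> nat) (A : {set 'I_m}) (w : Omega) : R :=
  rsum [pred w' : Omega | [forall i in A, X i w' == X i w]] P.

(* Joint entropy H(X_A) = - sum_x p(x) ln p(x), written as
   - sum_w P(w) ln Pr[X_A = X_A(w)] (natural log; the base is irrelevant
   for the homogeneous inequality below). *)
Definition entropy (Omega : finType) (P : Omega -> R) (m : nat)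
  (X : 'I_m -> Omega -> nat) (A : {set 'I_m}) : R :=
  (- rsum [pred w : Omega | true] (fun w => P w * ln (prob_eq P X A w)))%R.

Definition cond_entropy (Omega : finType) (P : Omega -> R) (m : nat)
  (X : 'I_m -> Omega -> nat) (A B : {set 'I_m}) : R :=
  (entropy P X (A :|: B) - entropy P X B)%R.

(* (R_i : i in T) in R_T; the rate vector is a function on 'I_m whose values
   outside T are irrelevant. *)
Definition rate_region (Omega : finType) (P : Omega -> R) (m : nat)
  (X : 'I_m -> Omega -> nat) (T : {set 'I_m}) (Rv : 'I_m -> R) : Prop :=
  forall B : {set 'I_m}, B \proper [set: 'I_m] -> B :&: T != set0 ->
    (cond_entropy P X (B :&: T) (~: B) <= rsum (mem (B :&: T)) Rv)%R.

(* For j in T, the constraint of the rate region for B = M \ {j} reads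
   H(X_{T\j} | X_j) <= sum_{i in T\j} R_i.  Summing over the m - 1 elements
   j of T counts every R_i exactly m - 2 times. *)
From mathcomp Require Import all_boot.
From Stdlib Require Import Reals Lra Lia.
From mathcomp Require Import zify.
From HB Require Import structures.

Set Implicit Arguments.
Unset Strict Implicit.
Unset Printing Implicit Defensive.

HB.instance Definition _ :=
  Monoid.isComLaw.Build R 0%R Rplus
    (fun a b c => esym (Rplus_assoc a b c)) Rplus_comm Rplus_0_l.

Lemma rsum_const (I : finType) (A : {pred I}) (c : R) :
  rsum A (fun _ => c) = (INR #|A| * c)%R.
Proof.
rewrite /rsum big_const; elim: #|A| => [|n IH]; first by rewrite /= Rmult_0_l.
by rewrite iterS IH S_INR; ring.
Qed.

Lemma rsum_le (I : finType) (A : {pred I}) (F G : I -> R) :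
  (forall i, i \in A -> F i <= G i)%R -> (rsum A F <= rsum A G)%R.
Proof.
move=> leFG; apply: (big_ind2 (fun x y => x <= y)%R) => //.
- exact: Rle_refl.
- by move=> ? ? ? ? ? ?; apply: Rplus_le_compat.
Qed.

Lemma rsum_setD1 (I : finType) (A : {set I}) (F : I -> R) (j : I) :
  j \in A -> (rsum (mem (A :\ j)) F + F j)%R = rsum (mem A) F.
Proof.
move=> jA; rewrite /rsum [in RHS](bigD1 j) //= Rplus_comm; congr Rplus.
by apply: eq_bigl => i; rewrite !inE andbC.
Qed.

Lemma rsum_rsum_setD1 (I : finType) (A : {set I}) (F : I -> R) :
  (rsum (mem A) (fun j => rsum (mem (A :\ j)) F) + rsum (mem A) F)%R
  = (INR #|A| * rsum (mem A) F)%R.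
Proof.
rewrite -rsum_const /rsum -big_split /=.
by apply: eq_bigr => j jA; apply: rsum_setD1.
Qed.

Lemma rate_region_setD1 (Omega : finType) (P : Omega -> R) (m : nat)
  (X : 'I_m -> Omega -> nat) (T : {set 'I_m}) (Rv : 'I_m -> R) (j : 'I_m) :
  rate_region P X T Rv -> (1 < #|T|)%N -> j \in T ->
  (cond_entropy P X (T :\ j) [set j] <= rsum (mem (T :\ j)) Rv)%R.
Proof.
move=> region T_gt1 jT.
have := region (~: [set j]); rewrite setCK setIC -setDE; apply.
  apply/properP; split; first exact: subsetT.
  by exists j; rewrite ?in_setT // !inE eqxx.
by rewrite -card_gt0 (cardsD1 j T) jT in T_gt1 *.
Qed.

Theorem lemma7 (m : nat) (Omega : finType) (P : Omega -> R)
  (X : 'I_m -> Omega -> nat) (T : {set 'I_m}) :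
  (3 <= m)%N -> is_pmf P -> #|T| = (m - 1)%N ->
  forall Rv : 'I_m -> R, rate_region P X T Rv ->
  (/ INR (m - 2) * rsum (mem T) (fun j => cond_entropy P X (T :\ j) [set j])
     <= rsum (mem T) Rv)%R.
Proof.
move=> m_ge3 _ cardT Rv region.
have sum_le : (rsum (mem T) (fun j => cond_entropy P X (T :\ j) [set j])
               <= rsum (mem T) (fun j => rsum (mem (T :\ j)) Rv))%R.
  by apply: rsum_le => j; apply: rate_region_setD1; rewrite // cardT; lia.
have double_count := rsum_rsum_setD1 T Rv.
rewrite cardT (_ : (m - 1 = (m - 2).+1)%N) ?S_INR in double_count; last lia.
have m2_gt0 : (0 < INR (m - 2))%R by apply: lt_0_INR; apply/ltP; lia.
apply: (Rmult_le_reg_l (INR (m - 2))) => //.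
rewrite -Rmult_assoc Rinv_r; last lra.
nra.
Qed.
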